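(* Let $(Z_0,\dots,Z_H)$ be a process on an abstract state space $\mathcal{Z}$, fix $t\in\{1,\dots,H\}$, and consider two hypotheses $H_0,H_1$ under which $Z_t$ has distributions $P^{(0)}_{Z_t}\ll P^{(1)}_{Z_t}$ with $\chi^2(P^{(0)}_{Z_t}\|P^{(1)}_{Z_t})=\Delta^2<\infty$, and under which, for $u\in\{t,\dots,H-1\}$, $Z_{u+1}$ given $Z_t,\dots,Z_u$ is distributed as $K_u(\cdot\mid Z_u)$ for Markov kernels $K_u$ common to both hypotheses with $\eta_{\chi^2}(K_u)\le\eta<1$. Let $R=g(Z_H)\in\{0,1\}$ for a fixed function $g$, and let $R^{1:n}$ denote $n$ i.i.d. samples of $R$ (drawn under $H_i$ when hypothesis $H_i$ holds, with $\mathbb{P}_i$ the corresponding probability). Fix $\epsilon\in(0,1/2)$. Then $$\inf_{\psi}\max_{i\in\{0,1\}}\mathbb{P}_i\big(\psi(R^{1:n})\neq i\big)\ \ge\ \frac12\left(1-\sqrt{\frac{(1+\eta^{H-t}\Delta^2)^n-1}{2}}\right),$$ where the infimum is over all tests $\psi:\{0,1\}^n\to\{0,1\}$. In particular, if $$n\le \frac{\ln\big(1+2(1-2\epsilon)^2\big)}{\eta^{H-t}\Delta^2},$$ then every test $\psi$ has $\max_{i\in\{0,1\}}\mathbb{P}_i(\psi(R^{1:n})\neq i)\ge\epsilon$.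
   Context: For distributions $P\ll Q$, $\chi^2(P\|Q)=\int (dP/dQ-1)^2\,dQ$. For a Markov kernel $K$, $PK$ is the pushforward $\int K(\cdot\mid x)\,dP(x)$, and the $\chi^2$-contraction coefficient is $\eta_{\chi^2}(K)=\sup\{\chi^2(PK\|QK)/\chi^2(P\|Q): P\ll Q,\ 0<\chi^2(P\|Q)<\infty\}$. *)

From HB Require Import structures.
From mathcomp Require Import all_boot all_order all_algebra.
From mathcomp Require Import all_classical all_reals all_analysis.

Set Implicit Arguments.
Unset Strict Implicit.
Unset Printing Implicit Defensive.
Import Order.TTheory GRing.Theory Num.Theory.

Local Open Scope classical_set_scope.
Local Open Scope ring_scope.

Section kernel_pushforward.
Local Open Scope ereal_scope.
Context {R : realType} {d d' : measure_display}
  {X : measurableType d} {Y : measurableType d'}.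
Variables (K : R.-pker X ~> Y) (P : probability X R).

Definition kpush (A : set Y) : \bar R := \int[P]_x K x A.

Let kpush0 : kpush set0 = 0.
Proof.
by rewrite /kpush (eq_integral (cst 0)) ?integral0// => y _; rewrite measure0.
Qed.

Let kpush_ge0 A : 0 <= kpush A. Proof. exact: integral_ge0. Qed.

Let kpush_sigma_additive : semi_sigma_additive kpush.
Proof.
move=> U mU tU mUU; rewrite [X in _ --> X](_ : _ =
  \int[P]_y (\sum_(n <oo) K y (U n))); last first.
  apply: eq_integral => V _.
  by apply/esym/cvg_lim => //; exact/measure_semi_sigma_additive.
apply/cvg_closeP; split.
  by apply: is_cvg_nneseries => n _ _; exact: integral_ge0.
rewrite closeE// integral_nneseries// => n.
exact: (measurable_kernel K _ (mU n)).
Qed.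

HB.instance Definition _ := isMeasure.Build _ _ R
  kpush kpush0 kpush_ge0 kpush_sigma_additive.

Let kpush_setT : kpush [set: Y] = 1%E.
Proof.
rewrite /kpush (eq_integral (cst 1)).
  by rewrite integral_cst//= probability_setT mule1.
by move=> x _; rewrite prob_kernel.
Qed.

HB.instance Definition _ := Measure_isProbability.Build _ _ R
  kpush kpush_setT.

End kernel_pushforward.

Section chi2_def.
Local Open Scope ereal_scope.
Local Open Scope charge_scope.
Context {R : realType} {d : measure_display} {T : measurableType d}.

Definition chi2 (P Q : probability T R) : \bar R :=
  if pselect (P `<< Q) is left _ then
    \int[Q]_x ((('d (charge_of_finite_measure P) '/d Q) x - 1)
               * (('d (charge_of_finite_measure P) '/d Q) x - 1))
  else +oo.

End chi2_def.

Section eta_def.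
Local Open Scope ereal_scope.
Context {R : realType} {d : measure_display} {T : measurableType d}.

Definition eta_chi2 (K : R.-pker T ~> T) : \bar R :=
  ereal_sup [set r | exists P Q : probability T R,
    [/\ P `<< Q, 0 < chi2 P Q, chi2 P Q < +oo &
        r = chi2 (kpush K P) (kpush K Q) * ((fine (chi2 P Q))^-1)%:E]].

End eta_def.

Definition iid_bernoulli_pmf {R : realType} (n : nat) (p : R)
    (x : {ffun 'I_n -> bool}) : R :=
  \prod_(k < n) (if x k then p else 1 - p).

Definition test_error {R : realType} (n : nat) (p : R)
    (psi : {ffun 'I_n -> bool} -> bool) (b : bool) : R :=
  \sum_(x : {ffun 'I_n -> bool} | psi x != b) iid_bernoulli_pmf p x.

Arguments iid_bernoulli_pmf {R} n p x.
Arguments test_error {R} n p psi b.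

(* A test based on n samples of R = g(Z_H) cannot beat the total variation
   between the two n-fold Bernoulli product laws of R, which Cauchy-Schwarz
   bounds by the square root of their chi^2 divergence; chi^2 tensorizes, so
   this is (1 + c)^n - 1, where c is the chi^2 divergence between the laws of
   R under H_0 and H_1.  By data processing on the partition {g = 1}, {g = 0},
   c is at most the chi^2 divergence between the laws of Z_H, and the laws of
   Z_{t+k} are obtained from those of Z_t by pushing through K_t, ...,
   K_{t+k-1}, each of which contracts chi^2 by eta: hence c <= eta^(H-t) Delta^2.
   The sample-size corollary follows from (1 + x)^n <= exp(n x). *)

From HB Require Import structures.
From mathcomp Require Import all_boot all_order all_algebra.
From mathcomp Require Import all_classical all_reals all_analysis.
From mathcomp Require Import measurable_realfun ring lra.
Set Implicit Arguments.
Unset Strict Implicit.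
Unset Printing Implicit Defensive.
Import Order.TTheory GRing.Theory Num.Theory.
Local Open Scope classical_set_scope.
Local Open Scope ring_scope.

Section iid_bernoulli_tests.
Context {R : realType}.
Implicit Types (n : nat) (p x : R).

Lemma sum_ffun_prod n (F : bool -> R) :
  \sum_(y : {ffun 'I_n -> bool}) \prod_(k < n) F (y k) = (F true + F false) ^+ n.
Proof.
rewrite -(bigA_distr_bigA (fun (_ : 'I_n) b => F b)) /=.
by rewrite prodr_const card_ord big_bool.
Qed.

Lemma iid_bernoulli_pmf_sum1 n p : \sum_y iid_bernoulli_pmf n p y = 1.
Proof.
rewrite (sum_ffun_prod n (fun b => if b then p else 1 - p)).
by rewrite addrC subrK expr1n.
Qed.

Lemma iid_bernoulli_pmf_gt0 n p (y : {ffun 'I_n -> bool}) :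
  0 < p < 1 -> 0 < iid_bernoulli_pmf n p y.
Proof.
case/andP=> p0 p1; apply: prodr_gt0 => k _.
by case: (y k); rewrite ?subr_gt0.
Qed.

Definition bernoulli_chi2 (p0 p1 : R) : R :=
  (p0 - p1) ^+ 2 / p1 + (p0 - p1) ^+ 2 / (1 - p1).

Lemma bernoulli_chi2_ge0 (p0 p1 : R) : 0 < p1 < 1 -> 0 <= bernoulli_chi2 p0 p1.
Proof.
by case/andP=> p10 p11; rewrite addr_ge0 ?divr_ge0 ?sqr_ge0 ?subr_ge0 ?ltW.
Qed.

Lemma bernoulli_chi2_le0 (p0 p1 : R) :
  0 < p1 < 1 -> bernoulli_chi2 p0 p1 <= 0 -> p0 = p1.
Proof.
case/andP=> p10 p11 le0.
have t2 : 0 <= (p0 - p1) ^+ 2 / (1 - p1) by rewrite divr_ge0 ?sqr_ge0 ?subr_ge0 ?ltW.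
have : (p0 - p1) ^+ 2 / p1 = 0.
  apply/eqP; rewrite eq_le; apply/andP; split; last by rewrite divr_ge0 ?sqr_ge0 ?ltW.
  by move: le0; rewrite /bernoulli_chi2; lra.
move/eqP; rewrite mulf_eq0 invr_eq0 (gt_eqF p10) orbF sqrf_eq0 subr_eq0.
by move/eqP.
Qed.

Lemma iid_bernoulli_chi2 n (p0 p1 : R) : 0 < p1 < 1 ->
  \sum_y (iid_bernoulli_pmf n p0 y - iid_bernoulli_pmf n p1 y) ^+ 2
         / iid_bernoulli_pmf n p1 y
  = (1 + bernoulli_chi2 p0 p1) ^+ n - 1.
Proof.
move=> p01; have /andP[p10 p11] := p01.
have p1_neq0 : p1 != 0 by rewrite lt0r_neq0.
have p1c_neq0 : 1 - p1 != 0 by rewrite lt0r_neq0 ?subr_gt0.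
set P0 := iid_bernoulli_pmf n p0; set P1 := iid_bernoulli_pmf n p1.
have sum_ratio : \sum_y P0 y ^+ 2 / P1 y = (1 + bernoulli_chi2 p0 p1) ^+ n.
  rewrite (_ : 1 + _ = p0 ^+ 2 / p1 + (1 - p0) ^+ 2 / (1 - p1)); last first.
    by rewrite /bernoulli_chi2; field; rewrite p1_neq0 p1c_neq0.
  rewrite -(sum_ffun_prod n (fun b => (if b then p0 else 1 - p0) ^+ 2
                                      / (if b then p1 else 1 - p1))).
  apply: eq_bigr => y _; rewrite /P0 /P1 /iid_bernoulli_pmf prodf_div prodrXl.
  by congr (_ ^+ 2 / _); apply: eq_bigr => k _; case: (y k).
rewrite (eq_bigr (fun y => P0 y ^+ 2 / P1 y - 2 * P0 y + P1 y)); last first.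
  move=> y _; have := iid_bernoulli_pmf_gt0 y p01.
  by rewrite -/P1 => P1y; field; rewrite gt_eqF.
rewrite big_split sumrB /= -mulr_sumr !iid_bernoulli_pmf_sum1 sum_ratio.
ring.
Qed.

(* Cauchy-Schwarz by completing the square: with [s = +-1] the sign of [A],
   [0 <= \sum_y P1 y (D y / P1 y - 2 gap s y)^2 = S - 4 gap^2]. *)
Lemma sqr_mass_gap_le_chi2 (T : finType) (P0 P1 : T -> R) (A : pred T) :
  \sum_y P0 y = 1 -> \sum_y P1 y = 1 -> (forall y, 0 < P1 y) ->
  4 * (\sum_(y | A y) P0 y - \sum_(y | A y) P1 y) ^+ 2
  <= \sum_y (P0 y - P1 y) ^+ 2 / P1 y.
Proof.
move=> sum0 sum1 P1_gt0.
pose s y : R := if A y then 1 else -1.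
pose D y := P0 y - P1 y.
pose gap := \sum_(y | A y) P0 y - \sum_(y | A y) P1 y.
pose S := \sum_y D y ^+ 2 / P1 y.
have gapE : \sum_y s y * D y = 2 * gap.
  have gA : \sum_(y | A y) D y = gap by rewrite sumrB.
  have : \sum_y D y = 0 by rewrite sumrB sum0 sum1 subrr.
  rewrite (bigID A) /= gA => sumD.
  have sA : \sum_(y | A y) s y * D y = gap.
    by rewrite -gA; apply: eq_bigr => y Ay; rewrite /s Ay mul1r.
  have sNA : \sum_(y | ~~ A y) s y * D y = - \sum_(y | ~~ A y) D y.
    by rewrite -sumrN; apply: eq_bigr => y /negbTE nAy; rewrite /s nAy mulN1r.
  rewrite (bigID A) /= sA sNA; move: sumD; set X := \sum_(y | _) D y.
  lra.
pose c := 2 * gap.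
have sq_term y : P1 y * (D y / P1 y - c * s y) ^+ 2
                 = D y ^+ 2 / P1 y - 2 * c * (s y * D y) + c ^+ 2 * P1 y.
  have s2 : s y ^+ 2 = 1 by rewrite /s; case: (A y); rewrite ?sqrrN expr1n.
  rewrite sqrrB (exprMn _ c) s2; field; exact: lt0r_neq0.
have : 0 <= \sum_y P1 y * (D y / P1 y - c * s y) ^+ 2.
  by apply: sumr_ge0 => y _; rewrite mulr_ge0 ?sqr_ge0 ?ltW.
rewrite (eq_bigr _ (fun y _ => sq_term y)) !big_split /= sumrN -!mulr_sumr gapE sum1.
rewrite -/S -/gap /c; clearbody S gap; lra.
Qed.

Lemma test_errorE n p psi (b : bool) :
  test_error n p psi b =
  if b then 1 - \sum_(y | psi y) iid_bernoulli_pmf n p y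
  else \sum_(y | psi y) iid_bernoulli_pmf n p y.
Proof.
case: b; last by apply: eq_bigl => y; case: (psi y).
rewrite -(iid_bernoulli_pmf_sum1 n p) (bigID psi) /= addrC addrK.
by apply: eq_bigl => y; case: (psi y).
Qed.

Lemma max_test_error_ge n (p0 p1 : R) x (psi : {ffun 'I_n -> bool} -> bool) :
  0 <= x -> p0 = p1 \/ 0 < p1 < 1 /\ bernoulli_chi2 p0 p1 <= x ->
  1 / 2 * (1 - Num.sqrt (((1 + x) ^+ n - 1) / 2))
  <= Num.max (test_error n p0 psi false) (test_error n p1 psi true).
Proof.
move=> x0 hyp; rewrite !test_errorE.
set a0 := \sum_(y | _) _; set a1 := \sum_(y | _) _.
suff gap : a1 - a0 <= Num.sqrt (((1 + x) ^+ n - 1) / 2).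
  by rewrite le_max; apply/orP; case: (lerP (1 - a1) a0) => h; [left|right]; lra.
case: hyp => [eq_p|[p01 chi2_le]]; first by rewrite /a0 /a1 eq_p subrr sqrtr_ge0.
have := sqr_mass_gap_le_chi2 psi (iid_bernoulli_pmf_sum1 n p0)
  (iid_bernoulli_pmf_sum1 n p1) (fun y => iid_bernoulli_pmf_gt0 y p01).
rewrite iid_bernoulli_chi2 // -/a0 -/a1 => sqr_gap.
have : (1 + bernoulli_chi2 p0 p1) ^+ n <= (1 + x) ^+ n.
  by rewrite lerXn2r ?nnegrE ?lerD2l //; have := bernoulli_chi2_ge0 p0 p01; lra.
move=> pow_le; apply: le_trans (ler_norm _) _.
have sqr_gap_ge0 := sqr_ge0 (a0 - a1).
by rewrite -normrN opprB -sqrtr_sqr ler_sqrt; lra.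
Qed.

Lemma error_bound_ge_eps n x eps : 0 <= x -> 0 < eps < 1 / 2 ->
  n%:R * x <= ln (1 + 2 * (1 - 2 * eps) ^+ 2) ->
  eps <= 1 / 2 * (1 - Num.sqrt (((1 + x) ^+ n - 1) / 2)).
Proof.
move=> x0 /andP[e0 e1] hn.
have ypos : 0 < 1 + 2 * (1 - 2 * eps) ^+ 2 by have := sqr_ge0 (1 - 2 * eps); lra.
have pow_le : (1 + x) ^+ n <= 1 + 2 * (1 - 2 * eps) ^+ 2.
  apply: (@le_trans _ _ (expR x ^+ n)).
    by rewrite lerXn2r ?nnegrE ?expR_ge0 ?expR_ge1Dx //; lra.
  by rewrite -expRM_natl -[leRHS]lnK ?posrE // ler_expR.
have : Num.sqrt (((1 + x) ^+ n - 1) / 2) <= 1 - 2 * eps.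
  rewrite -[leRHS]gtr0_norm ?subr_gt0; last lra.
  by rewrite -sqrtr_sqr ler_sqrt ?sqr_ge0 //; lra.
lra.
Qed.

End iid_bernoulli_tests.

Section chi2_bernoulli_bound.
Context {R : realType} {d : measure_display} {T : measurableType d}.
Implicit Types P Q : probability T R.
Local Open Scope ereal_scope.
Local Open Scope charge_scope.

Lemma chi2_ge0 P Q : 0 <= chi2 P Q.
Proof.
rewrite /chi2; case: pselect => _ //.
by apply: integral_ge0 => x _; rewrite -expe2 sqre_ge0.
Qed.

Lemma chi2_lty_dominates P Q : chi2 P Q < +oo -> P `<< Q.
Proof. by rewrite /chi2; case: pselect => // _; rewrite ltxx. Qed.

Lemma sqr_divE (u v : R) : (u ^+ 2 / v = 2 * (u / v) * u - (u / v) ^+ 2 * v)%R.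
Proof.
have [->|v_neq0] := eqVneq v 0%R; first by rewrite invr0 !mulr0 mul0r subr0.
by field.
Qed.

Section dominated.
Variables P Q : probability T R.
Hypothesis PQ : P `<< Q.

Let cPQ : charge_of_finite_measure P `<< Q := PQ.
Let f := 'd (charge_of_finite_measure P) '/d Q.

Lemma chi2_dominatedE : chi2 P Q = \int[Q]_x ((f x - 1) * (f x - 1)).
Proof. by rewrite /chi2; case: pselect => // /(_ PQ). Qed.

(* Pointwise, [(f - 1)^2 >= 2 al (f - 1) - al^2]; integrate over [E]. *)
Lemma chi2_integral_ge E (al : R) : measurable E -> chi2 P Q < +oo ->
  ((2 * al * (fine (P E) - fine (Q E)) - al ^+ 2 * fine (Q E))%:E
   <= \int[Q]_(x in E) ((f x - 1) * (f x - 1))).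
Proof.
move=> mE chi2_lty.
have f_fin x : f x \is a fin_num by exact: Radon_Nikodym_fin_num.
have f_int : Q.-integrable setT f by exact: Radon_Nikodym_integrable.
have fE_int : Q.-integrable E f by exact: integrableS f_int.
have cst_int (r : R) : Q.-integrable E (fun=> r%:E).
  exact: finite_measure_integrable_cst.
have fm1_int : Q.-integrable E (fun x => f x - 1) by exact: integrableB.
have Zfm1_int := integrableZl mE (2 * al) fm1_int.
have sqr_int : Q.-integrable E (fun x => (f x - 1) * (f x - 1)).
  have sqr_ge0 x : 0 <= (f x - 1) * (f x - 1) by rewrite -expe2 sqre_ge0.
  apply: integrableS (subsetT E) _ => //; apply/integrableP; split.
    by apply: emeasurable_funM; apply: emeasurable_funB => //; case/integrableP: f_int.
  by under eq_integral do rewrite gee0_abs //; rewrite -chi2_dominatedE.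
have lower_int : \int[Q]_(x in E) ((2 * al)%:E * (f x - 1) - (al ^+ 2)%:E)
    = (2 * al * (fine (P E) - fine (Q E)) - al ^+ 2 * fine (Q E))%:E :> \bar R.
  rewrite (integralB mE Zfm1_int (cst_int _)) integralZl //.
  rewrite (integralB mE fE_int (cst_int _)) -Radon_Nikodym_integral //.
  rewrite !integral_cst // mul1e.
  by rewrite EFinB !EFinM EFinB !fineK ?fin_num_measure.
rewrite -lower_int; apply: le_integral => //; first exact: integrableB.
move=> x _; rewrite -(fineK (f_fin x)) -(EFinB _ 1) -!EFinM -EFinB lee_fin.
by have := sqr_ge0 (fine (f x) - 1 - al)%R; nra.
Qed.

Lemma chi2_ge_bernoulli_chi2 A : measurable A ->
  (bernoulli_chi2 (fine (P A)) (fine (Q A)))%:E <= chi2 P Q.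
Proof.
move=> mA; have [->|chi2_lty] := eqVneq (chi2 P Q) +oo; first by rewrite leey.
rewrite -ltey in chi2_lty.
have mAC : measurable (~` A) by exact: measurableC.
have fineC (M : probability T R) : fine (M (~` A)) = (1 - fine (M A))%R.
  by rewrite probability_setC // -(fineK (fin_num_measure M _ mA)).
set a := fine (P A); set b := fine (Q A).
(* The optimal slopes [al] on [A] and on [~` A]. *)
have onA := chi2_integral_ge ((a - b) / b) mA chi2_lty.
have onAC := chi2_integral_ge ((b - a) / (1 - b)) mAC chi2_lty.
rewrite !fineC -/a -/b (_ : (1 - a - (1 - b) = b - a)%R) in onAC; last by ring.
pose h x := (f x - 1) * (f x - 1).
have mf : measurable_fun setT f by case/integrableP: (Radon_Nikodym_integrable cPQ).
have mh : measurable_fun (A `|` ~` A) h.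
  by rewrite setUv; apply: emeasurable_funM; apply: emeasurable_funB.
have h_ge0 : forall x, (A `|` ~` A) x -> 0 <= h x.
  by move=> x _; rewrite /h -expe2 sqre_ge0.
have disjA : [disjoint A & ~` A] by rewrite disj_set2E setICr.
rewrite chi2_dominatedE -/h -(setUv A) (ge0_integral_setU _ mA mAC mh h_ge0 disjA).
apply: le_trans (leeD onA onAC); rewrite -EFinD lee_fin /bernoulli_chi2.
rewrite -/a -/b (sqr_divE (a - b) b) -(sqrrN (a - b)) opprB (sqr_divE (b - a) (1 - b)).
lra.
Qed.

End dominated.

Lemma chi2_le_bernoulli P Q A (x : R) : measurable A -> chi2 P Q <= x%:E ->
  fine (P A) = fine (Q A) \/
  (0 < fine (Q A) < 1)%R /\ (bernoulli_chi2 (fine (P A)) (fine (Q A)) <= x)%R.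
Proof.
move=> mA chi2_le.
have PQ : P `<< Q by apply: chi2_lty_dominates; exact: le_lt_trans chi2_le (ltry _).
have null_Q := (null_content_dominatesP P Q).1 PQ.
have QA := fineK (fin_num_measure Q _ mA).
have [QA0|QA_neq0] := eqVneq (fine (Q A)) 0%R.
  by left; rewrite QA0 null_Q // -QA QA0.
have [QA1|QA_neq1] := eqVneq (fine (Q A)) 1%R.
  left; rewrite QA1.
  have QAC0 : Q (~` A) = 0 by rewrite probability_setC // -QA QA1 subee.
  have := null_Q _ (measurableC mA) QAC0.
  rewrite probability_setC // -(fineK (fin_num_measure P _ mA)) -EFinB => /eqP.
  by rewrite eqe subr_eq0 eq_sym => /eqP.
right; split.
  have QA_ge0 : (0 <= fine (Q A))%R by exact: fine_ge0.
  have QA_le1 : (fine (Q A) <= 1)%R by rewrite -lee_fin QA probability_le1.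
  by rewrite !lt_neqAle eq_sym QA_neq0 QA_neq1 QA_ge0 QA_le1.
by rewrite -lee_fin; apply: le_trans chi2_le; exact: chi2_ge_bernoulli_chi2.
Qed.

Lemma chi2_le0_eq P Q : chi2 P Q <= 0 -> forall B, measurable B -> P B = Q B.
Proof.
move=> chi2_le0 B mB.
rewrite -(fineK (fin_num_measure P _ mB)) -(fineK (fin_num_measure Q _ mB)).
by case: (chi2_le_bernoulli mB chi2_le0) => [->|[/bernoulli_chi2_le0 eqPQ /eqPQ ->]].
Qed.

End chi2_bernoulli_bound.

Section kpush_contraction.
Context {R : realType} {d : measure_display} {T : measurableType d}.
Variable K : R.-pker T ~> T.
Implicit Types P Q : probability T R.
Local Open Scope ereal_scope.

Lemma kpush_agree P Q : (forall B, measurable B -> P B = Q B) ->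
  forall B, measurable B -> kpush K P B = kpush K Q B.
Proof. by move=> PQ B mB; apply: eq_measure_integral => A mA _; exact: PQ. Qed.

Lemma chi2_kpush_le P Q (eta : R) : eta_chi2 K <= eta%:E ->
  0 < chi2 P Q -> chi2 P Q < +oo ->
  chi2 (kpush K P) (kpush K Q) <= eta%:E * chi2 P Q.
Proof.
move=> K_eta chi2_gt0 chi2_lty.
have chi2_fin : chi2 P Q = (fine (chi2 P Q))%:E.
  by rewrite fineK // ge0_fin_numE ?chi2_ge0.
have c_gt0 : (0 < fine (chi2 P Q))%R by apply: fine_gt0; rewrite chi2_gt0 chi2_lty.
have ratio_le : chi2 (kpush K P) (kpush K Q) * ((fine (chi2 P Q))^-1)%:E <= eta%:E.
  apply: le_trans K_eta; apply: ereal_sup_ubound.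
  by exists P, Q; split => //; exact: chi2_lty_dominates.
rewrite chi2_fin; move: ratio_le (chi2_ge0 (kpush K P) (kpush K Q)).
case: (chi2 (kpush K P) (kpush K Q)) => [r| |] //.
  by rewrite -!EFinM !lee_fin ler_pdivrMr.
by rewrite gt0_mulye ?leye_eq // lte_fin invr_gt0.
Qed.

End kpush_contraction.

Section markov_chain_laws.
Context {R : realType} {dO : measure_display} {Omega : measurableType dO}
  {dZ : measure_display} {Zsp : measurableType dZ}.
Variables (Pr : bool -> probability Omega R) (Z : nat -> {mfun Omega >-> Zsp})
  (K : nat -> R.-pker Zsp ~> Zsp) (t H : nat).
Local Open Scope ereal_scope.

Fixpoint chain_law (i : bool) (k : nat) : probability Zsp R :=
  if k is k'.+1 then kpush (K (t + k')%N) (chain_law i k')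
  else distribution (Pr i) (Z t).

Hypothesis Z_step : forall i u, (t <= u < H)%N -> forall B, measurable B ->
  Pr i (Z u.+1 @^-1` B) = \int[Pr i]_w K u (Z u w) B.

Lemma chain_lawE i k : (t + k <= H)%N -> forall B, measurable B ->
  chain_law i k B = distribution (Pr i) (Z (t + k)%N) B.
Proof.
elim: k => [|k IH] tkH B mB; first by rewrite addn0.
have tk : (t + k < H)%N by rewrite -addnS.
rewrite /= /kpush (eq_measure_integral (distribution (Pr i) (Z (t + k)%N))); last first.
  by move=> A mA _; apply: IH => //; exact: ltnW.
rewrite ge0_integral_distribution //; last exact: measurable_kernel.
by rewrite addnS /distribution /pushforward Z_step // leq_addr.
Qed.

(* [eta_chi2] only controls pairs with [0 < chi2 < +oo]; once the two laws
   agree, agreement is propagated instead of a chi^2 bound. *)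
Lemma chi2_chain_law_le (eta Delta : R) k :
  chi2 (distribution (Pr false) (Z t)) (distribution (Pr true) (Z t))
    = (Delta ^+ 2)%:E ->
  (0 <= eta)%R -> (forall u, (t <= u < H)%N -> eta_chi2 (K u) <= eta%:E) ->
  (t + k <= H)%N ->
  (forall B, measurable B -> chain_law false k B = chain_law true k B) \/
  chi2 (chain_law false k) (chain_law true k) <= (eta ^+ k * Delta ^+ 2)%:E.
Proof.
move=> chi2_t eta_ge0 K_eta; elim: k => [|k IH] tkH.
  by right; rewrite /= chi2_t expr0 mul1r.
have tk_lt : (t + k < H)%N by rewrite -addnS.
have tk : (t <= t + k < H)%N by rewrite leq_addr.
case: (IH (ltnW tk_lt)) => [agree|chi2_le]; first by left; exact: kpush_agree.
have := chi2_ge0 (chain_law false k) (chain_law true k).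
rewrite le_eqVlt => /orP[/eqP chi2_eq0|chi2_gt0].
  by left; apply: kpush_agree; apply: chi2_le0_eq; rewrite -chi2_eq0.
right; apply: le_trans (chi2_kpush_le (K_eta _ tk) chi2_gt0 _) _.
  exact: le_lt_trans chi2_le (ltry _).
by rewrite exprS -mulrA EFinM lee_wpmul2l.
Qed.

End markov_chain_laws.

Theorem corollary3 (R : realType)
  (dO : measure_display) (Omega : measurableType dO)
  (dZ : measure_display) (Zsp : measurableType dZ)
  (Pr : bool -> probability Omega R)      (* Pr false = P_0 (H_0), Pr true = P_1 (H_1) *)
  (Z : nat -> {mfun Omega >-> Zsp})       (* the process Z_0, ..., Z_H *)
  (H t : nat) (Ht : (1 <= t <= H)%N)
  (Delta : R) (HDelta : 0 <= Delta)
  (Habs : distribution (Pr false) (Z t) `<< distribution (Pr true) (Z t))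
  (Hchi : chi2 (distribution (Pr false) (Z t)) (distribution (Pr true) (Z t))
          = (Delta ^+ 2)%:E)
  (K : nat -> R.-pker Zsp ~> Zsp) (eta : R)
  (Heta0 : 0 <= eta) (Heta1 : eta < 1)
  (HK : forall u, (t <= u < H)%N -> (eta_chi2 (K u) <= eta%:E)%E)
  (Hmarkov : forall (i : bool) (u : nat), (t <= u < H)%N ->
     forall (A : nat -> set Zsp) (B : set Zsp),
       (forall v, measurable (A v)) -> measurable B ->
       Pr i ((\bigcap_(v in [set v | (t <= v <= u)%N]) (Z v @^-1` A v))
             `&` (Z u.+1 @^-1` B))
       = (\int[Pr i]_(w in \bigcap_(v in [set v | (t <= v <= u)%N]) (Z v @^-1` A v))
            K u (Z u w) B)%E)
  (g : Zsp -> bool) (mg : measurable (g @^-1` [set true]))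
  (eps : R) (Heps : 0 < eps < 1 / 2) :
  let p (i : bool) : R := fine (Pr i (Z H @^-1` (g @^-1` [set true]))) in
  forall n : nat,
    ((1 / 2 * (1 - Num.sqrt (((1 + eta ^+ (H - t) * Delta ^+ 2) ^+ n - 1) / 2)))%:E
       <= ereal_inf [set (Num.max (test_error n (p false) psi false)
                                  (test_error n (p true) psi true))%:E
                    | psi in [set: {ffun 'I_n -> bool} -> bool]])%E
    /\
    (n%:R * (eta ^+ (H - t) * Delta ^+ 2) <= ln (1 + 2 * (1 - 2 * eps) ^+ 2) ->
     forall psi : {ffun 'I_n -> bool} -> bool,
       eps <= Num.max (test_error n (p false) psi false)
                      (test_error n (p true) psi true)).
Proof.
(* [Habs] follows from [Hchi]. *)
move=> p n.
set x := eta ^+ (H - t) * Delta ^+ 2.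
have x_ge0 : 0 <= x by rewrite mulr_ge0 ?exprn_ge0 ?sqr_ge0.
set A := g @^-1` [set true].
have tH : (t + (H - t) = H)%N by rewrite subnKC //; case/andP: Ht.
have Z_step i u : (t <= u < H)%N -> forall B, measurable B ->
    Pr i (Z u.+1 @^-1` B) = (\int[Pr i]_w K u (Z u w) B)%E.
  move=> tuH B mB; have := Hmarkov i u tuH (fun=> setT) B (fun=> measurableT) mB.
  have -> : \bigcap_(v in [set v | (t <= v <= u)%N]) (Z v @^-1` setT) = setT.
    by apply/seteqP; split => // w _ v _.
  by rewrite setTI.
have pE i : p i = fine (chain_law Pr Z K t i (H - t) A).
  by rewrite (chain_lawE Z_step) ?tH.
have p_close : p false = p true \/
    0 < p true < 1 /\ bernoulli_chi2 (p false) (p true) <= x.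
  have tH_le : (t + (H - t) <= H)%N by rewrite tH.
  rewrite !pE; case: (chi2_chain_law_le Hchi Heta0 HK tH_le) => [agree|].
    by left; rewrite agree.
  exact: chi2_le_bernoulli.
split.
  apply: le_ereal_inf_tmp => _ [psi _ <-].
  by rewrite lee_fin; exact: max_test_error_ge.
move=> n_le psi; apply: le_trans (max_test_error_ge psi x_ge0 p_close).
exact: error_bound_ge_eps.
Qed.
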